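(* Let $\mathcal{G}=(V,\mathit{Act},\mathcal{R})$ be a normed BPA system and $\gamma,\delta\in V^*$ with $R_\gamma=R_\delta$. Then for every $A\in V$ we have $R_{A\gamma}=R_{A\delta}$, and for all $\alpha,\beta\in V^*$ we have $\alpha\gamma\sim\beta\gamma$ iff $\alpha\delta\sim\beta\delta$. Moreover, for each $A\in V$ and $\gamma\in V^*$, the set of strings $\alpha\in V^*$ such that (a) $\alpha\gamma\sim A\gamma$ and (b) $\alpha$ is a redundancy-free prefix of $\alpha\gamma$ is finite and nonempty, and it depends only on $R_\gamma$ (not on $\gamma$ itself). Consequently the canonical transducer $\mathcal{T}^\mathcal{G}$ is well defined.
   Context: A BPA system $\mathcal{G}=(V,\mathit{Act},\mathcal{R})$: finite variables $V$, finite actions (possibly containing silent $\tau$), rules $A\xrightarrow{a}\alpha$; LTS $\mathcal{L}_\mathcal{G}$ on $V^*$ with $A\beta\xrightarrow{a}\alpha\beta$ for rules $A\xrightarrow{a}\alpha$. Normed: each variable can reach $\varepsilon$. $\sim$ is branching bisimilarity in $\mathcal{L}_\mathcal{G}$ (largest relation $\mathcal{B}$ such that for $(s,t)\in\mathcal{B}$ each move $s\xrightarrow{a}s'$ is matched by $a=\tau$ with $(s',t)\in\mathcal{B}$, or by $t=t_0\xrightarrow{\tau}\cdots\xrightarrow{\tau}t_k\xrightarrow{a}t'$ with $(s',t')\in\mathcal{B}$, $(s,t_i)\in\mathcal{B}$ for $i\in[1,k]$; and symmetrically). $R_\gamma=\{X\in V\mid X\gamma\sim\gamma\}$. The prefix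 $\alpha$ of $\alpha\gamma$ is redundancy-free if it cannot be written as $\alpha=\delta X\beta$ with $X\beta\gamma\sim\beta\gamma$. Fix a linear order on $V$; $\alpha$ is lexicographically smaller than $\beta$ if $\alpha$ is a proper suffix of $\beta$, or $\alpha=\alpha'A\gamma$, $\beta=\beta'B\gamma$ with $A<B$. The canonical transducer $\mathcal{T}^\mathcal{G}=(Q,V,\Delta,q_0)$: $Q=\{R_\gamma\mid\gamma\in V^*\}$, $q_0=R_\varepsilon$, and $\Delta(R_\gamma,A)=(R_{A\gamma},\alpha)$ where $\alpha$ is the lexicographically smallest among the longest strings satisfying (a) and (b) above. *)

From mathcomp Require Import all_boot.
Set Implicit Arguments. Unset Strict Implicit. Unset Printing Implicit Defensive.

(* A BPA system G = (V, Act, R): V and Act are finite types; the action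
   alphabet is [option Act], where [None] denotes the silent action tau. *)
Definition rule (V Act : finType) := (V * option Act * seq V)%type.

Section BPA.
Variables (V Act : finType) (R : seq (rule V Act)).

Definition step (s : seq V) (a : option Act) (t : seq V) : Prop :=
  exists X beta alpha, s = X :: beta /\ (X, a, alpha) \in R /\ t = alpha ++ beta.

Inductive reaches : seq V -> seq V -> Prop :=
| reaches_refl s : reaches s s
| reaches_step s a s' t : step s a s' -> reaches s' t -> reaches s t.

Definition normed : Prop := forall X : V, reaches [:: X] [::].

Inductive tau_path (B : seq V -> seq V -> Prop) (s : seq V) :
  seq V -> seq V -> Prop :=
| tau_path_refl t : tau_path B s t t
| tau_path_step t t1 u : step t None t1 -> B s t1 -> tau_path B s t1 u ->
                         tau_path B s t u.

Definition bb_half (B : seq V -> seq V -> Prop) : Prop :=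
  forall s t, B s t -> forall a s', step s a s' ->
    (a = None /\ B s' t) \/
    (exists u t', tau_path B s t u /\ step u a t' /\ B s' t').

Definition is_bbisim (B : seq V -> seq V -> Prop) : Prop :=
  bb_half B /\ bb_half (fun x y => B y x).

Definition bbisim (s t : seq V) : Prop :=
  exists B, is_bbisim B /\ B s t.

Definition Rset (gamma : seq V) (X : V) : Prop := bbisim (X :: gamma) gamma.

Definition sameR (gamma delta : seq V) : Prop :=
  forall X, Rset gamma X <-> Rset delta X.

Definition redfree (alpha gamma : seq V) : Prop :=
  ~ (exists d X beta, alpha = d ++ X :: beta /\
                      bbisim (X :: beta ++ gamma) (beta ++ gamma)).

Definition Sset (A : V) (gamma alpha : seq V) : Prop :=
  bbisim (alpha ++ gamma) (A :: gamma) /\ redfree alpha gamma.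

Definition lexlt (lt : rel V) (alpha beta : seq V) : Prop :=
  (exists p, p != [::] /\ beta = p ++ alpha) \/
  (exists a' b' A B g, alpha = a' ++ A :: g /\ beta = b' ++ B :: g /\ lt A B).

Definition strict_total (lt : rel V) : Prop :=
  irreflexive lt /\ transitive lt /\ (forall x y, x != y -> lt x y || lt y x).

Definition canon (lt : rel V) (A : V) (gamma alpha : seq V) : Prop :=
  Sset A gamma alpha /\
  (forall beta, Sset A gamma beta -> size beta <= size alpha) /\
  (forall beta, Sset A gamma beta -> size beta = size alpha -> beta <> alpha ->
                lexlt lt alpha beta).

End BPA.

(* Norms: the branching norm
   (least number of non-inert steps down to the empty word) can only decrease
   along bisimilarity, so [X :: a ++ g ~ g] forces [a ++ g ~ g], and a
   redundancy-free prefix [a] adds at least [size a] to the norm of [g]; the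
   strings in question are therefore bounded in length, and [[:: A]] or [[::]]
   is one of them.  Transfer: if R_g = R_d, pairing [a ++ d] with [b ++ d]
   whenever [a ++ g ~ b ++ g] is a branching bisimulation, since for
   [a ++ g] not bisimilar to [g] a matching tau-path never consumes [g] and
   replays above [d], while [a ++ g ~ g] already gives [a ++ d ~ d] letter by
   letter.  The canonical string is the least element of the resulting finite,
   R_g-invariant set for "longer, then lexicographically smaller". *)

From mathcomp Require Import all_boot zify.
From Stdlib Require Import Classical.
Set Implicit Arguments. Unset Strict Implicit. Unset Printing Implicit Defensive.

Section Bisimilarity.
Variables (V Act : finType) (R : seq (rule V Act)).

Notation step := (step R).
Notation tau_path := (tau_path R).
Notation bb_half := (bb_half R).
Notation bbisim := (bbisim R).

Lemma step_nil a t : ~ step [::] a t.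
Proof. by case=> X [b [al []]]. Qed.

Lemma step_cons X b a t :
  step (X :: b) a t <-> exists2 rho, (X, a, rho) \in R & t = rho ++ b.
Proof.
split; first by case=> Y [b' [al [[-> ->] [H ->]]]]; exists al.
by case=> rho H ->; exists X, b, rho.
Qed.

Lemma step_catr s a s' g : step s a s' -> step (s ++ g) a (s' ++ g).
Proof. by case=> X [b [al [-> [H ->]]]]; exists X, (b ++ g), al; rewrite catA. Qed.

Lemma tau_path_mono (B B' : seq V -> seq V -> Prop) s s' t u :
  (forall x, B s x -> B' s' x) -> tau_path B s t u -> tau_path B' s' t u.
Proof.
move=> HB; elim=> [t0|t0 t1 u0 Ht Bt1 _ IH]; first exact: tau_path_refl.
exact: tau_path_step Ht (HB _ Bt1) IH.
Qed.

Lemma tau_path_trans B s t w u :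
  tau_path B s t w -> tau_path B s w u -> tau_path B s t u.
Proof. by elim=> // t0 t1 u0 Ht Bt1 _ IH /IH; apply: tau_path_step. Qed.

Lemma tau_path_lastP B s t u : tau_path B s t u ->
  u = t \/ exists2 w, tau_path B s t w & step w None u.
Proof.
elim=> [t0|t0 t1 u0 Ht Bt1 p [->|[w pw Hw]]]; first by left.
- by right; exists t0; first exact: tau_path_refl.
- by right; exists w => //; exact: tau_path_step Ht Bt1 pw.
Qed.

Lemma tau_path_end B s t u : tau_path B s t u -> B s t -> B s u.
Proof. by elim=> // t0 t1 u0 _ Bt1 _ IH _; apply: IH. Qed.

Lemma tau_path_nil B s u : tau_path B s [::] u -> u = [::].
Proof. by move=> p; inversion p => //; case: (step_nil H). Qed.

Lemma bb_half_ext (B B' : seq V -> seq V -> Prop) :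
  (forall x y, B x y <-> B' x y) -> bb_half B -> bb_half B'.
Proof.
move=> E H s t /E Bst a s' Hs.
case: (H s t Bst a s' Hs) => [[-> /E]|[u [t' [p [Hu /E]]]]]; first by left.
by right; exists u, t'; split=> //; apply: tau_path_mono p => x /E.
Qed.

Lemma bbisim_half : bb_half bbisim.
Proof.
move=> s t [B [[H1 H2] Bst]] a s' Hs.
case: (H1 _ _ Bst _ _ Hs) => [[-> Bs't]|[u [t' [p [Hu Bs't']]]]].
- by left; split=> //; exists B.
- right; exists u, t'; split; last by split=> //; exists B.
  by apply: tau_path_mono p => x Bx; exists B.
Qed.

Lemma bbisim_sym_half (B : seq V -> seq V -> Prop) :
  (forall x y, B x y -> B y x) -> bb_half B -> forall x y, B x y -> bbisim x y.
Proof.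
move=> Bsym H x y Bxy; exists B; do !split=> //.
by apply: bb_half_ext H => p q; split; apply: Bsym.
Qed.

Lemma bbisim_refl s : bbisim s s.
Proof.
apply: (bbisim_sym_half (B := eq)) => // x _ <- a x' Hx.
by right; exists x, x'; split; first exact: tau_path_refl.
Qed.

Lemma bbisim_sym s t : bbisim s t -> bbisim t s.
Proof. by case=> B [[H1 H2] Bst]; exists (fun x y => B y x). Qed.

Definition rel_comp (B1 B2 : seq V -> seq V -> Prop) x z :=
  exists y, B1 x y /\ B2 y z.

Lemma tau_path_rel_comp B1 B2 s m t u : bb_half B2 ->
  tau_path B1 s m u -> B1 s m -> B2 m t ->
  exists2 t1, tau_path (rel_comp B1 B2) s t t1 & B2 u t1.
Proof.
move=> H2 p; elim: p t => [m0 t _ B2mt|m0 m1 u0 Hm B1m1 _ IH t B1sm0 B2mt].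
  by exists t; first exact: tau_path_refl.
case: (H2 _ _ B2mt _ _ Hm) => [[_ B2m1t]|[w [t' [pw [Hw B2m1t']]]]].
  exact: IH.
case: (IH t' B1m1 B2m1t') => t1 p1 B2ut1; exists t1 => //.
apply: tau_path_trans (tau_path_mono _ pw) _; first by move=> x Bx; exists m0.
by apply: tau_path_step Hw _ p1; exists m1.
Qed.

Lemma rel_comp_half B1 B2 : bb_half B1 -> bb_half B2 -> bb_half (rel_comp B1 B2).
Proof.
move=> H1 H2 s t [m [B1sm B2mt]] a s' Hs.
case: (H1 _ _ B1sm _ _ Hs) => [[-> B1s'm]|[u1 [m' [p [Hu1 B1s'm']]]]].
  by left; split=> //; exists m.
have [t1 p1 B2u1t1] := tau_path_rel_comp H2 p B1sm B2mt.
case: (H2 _ _ B2u1t1 _ _ Hu1) => [[Ha B2m't1]|[v [t' [pv [Hv B2m't']]]]].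
- case: (tau_path_lastP p1) => [Et1|[w pw Hw]].
    by left; split=> //; exists m'; rewrite -Et1.
  by right; exists w, t1; rewrite Ha; do !split=> //; exists m'.
- right; exists v, t'; split; last by split=> //; exists m'.
  apply: tau_path_trans p1 (tau_path_mono _ pv) => x Bx.
  by exists u1; split=> //; apply: tau_path_end p B1sm.
Qed.

Lemma bbisim_trans s t u : bbisim s t -> bbisim t u -> bbisim s u.
Proof.
case=> B1 [[H1 H1'] B1st] [B2 [[H2 H2'] B2tu]].
exists (rel_comp B1 B2); split; last by exists t.
split; first exact: rel_comp_half.
by apply: bb_half_ext (rel_comp_half H2' H1') => x y; split; case=> z []; exists z.
Qed.

Lemma bbisim_catl a g d : bbisim g d -> bbisim (a ++ g) (a ++ d).
Proof.
pose B x y := exists a g d, bbisim g d /\ x = a ++ g /\ y = a ++ d.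
have Bsym x y : B x y -> B y x.
  by case=> a' [g' [d' [? [-> ->]]]]; exists a', d', g'; split=> //; apply: bbisim_sym.
move=> Hgd; apply: (bbisim_sym_half Bsym); last by exists a, g, d.
move=> x y [[|X a'] [g' [d' [Hg'd' [-> ->]]]]] b x' /= Hs.
- case: (bbisim_half Hg'd' Hs) => [[-> Hx']|[u [t' [p [Hu Ht']]]]].
    by left; split=> //; exists [::], x', d'.
  right; exists u, t'; split; last by split=> //; exists [::], x', t'.
  by apply: tau_path_mono p => z Hz; exists [::], g', z.
- case/step_cons: Hs => rho Hr ->.
  right; exists (X :: a' ++ d'), (rho ++ a' ++ d'); split; first exact: tau_path_refl.
  split; first by apply/step_cons; exists rho.
  by exists (rho ++ a'), g', d'; rewrite -!catA.
Qed.

End Bisimilarity.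

Lemma nat_least (P : nat -> Prop) :
  (exists n, P n) -> exists n, P n /\ forall m, P m -> n <= m.
Proof.
case=> n; elim/ltn_ind: n => n IH Pn.
case: (classic (exists2 m, m < n & P m)) => [[m lt_mn Pm]|no_less].
  exact: IH lt_mn Pm.
exists n; split=> // m Pm; rewrite leqNgt; apply/negP => lt_mn.
by apply: no_less; exists m.
Qed.

Section Norms.
Variables (V Act : finType) (R : seq (rule V Act)).
Hypothesis normedR : normed R.

Notation step := (step R).
Notation tau_path := (tau_path R).
Notation bbisim := (bbisim R).
Notation reaches := (reaches R).

Lemma reaches_trans s t u : reaches s t -> reaches t u -> reaches s u.
Proof. by elim=> // s0 a s' t0 Hs _ IH /IH; apply: reaches_step Hs. Qed.

Lemma reaches_catr s t g : reaches s t -> reaches (s ++ g) (t ++ g).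
Proof.
elim=> [s0|s0 a s' t0 Hs _ IH]; first exact: reaches_refl.
exact: reaches_step (step_catr g Hs) IH.
Qed.

Lemma reaches_nil s : reaches s [::].
Proof.
elim: s => [|X s IH]; first exact: reaches_refl.
exact: reaches_trans (reaches_catr s (normedR X)) IH.
Qed.

(* The
   least [n] with [nreach s [::] n] is the branching norm of [s]. *)
Inductive nreach : seq V -> seq V -> nat -> Prop :=
| nreach_refl s : nreach s s 0
| nreach_inert s s' t n :
    step s None s' -> bbisim s s' -> nreach s' t n -> nreach s t n
| nreach_step s a s' t n : step s a s' -> nreach s' t n -> nreach s t n.+1.

Lemma nreach_trans s t u n m : nreach s t n -> nreach t u m -> nreach s u (n + m).
Proof.
elim=> // [s0 s' t0 n0 Hs Hss' _ IH /IH|s0 a s' t0 n0 Hs _ IH /IH].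
  exact: nreach_inert.
by rewrite addSn; apply: nreach_step Hs.
Qed.

Lemma nreach0_bbisim s t : nreach s t 0 -> bbisim s t.
Proof.
move=> H; move E: 0 H => n H; elim: H E => // [s0|s0 s' t0 n0 _ Hss' _ IH /IH].
  by move=> _; apply: bbisim_refl.
exact: bbisim_trans.
Qed.

Lemma reaches_nreach s t : reaches s t -> exists n, nreach s t n.
Proof.
elim=> [s0|s0 a s' t0 Hs _ [n Hn]]; first by exists 0; apply: nreach_refl.
by exists n.+1; apply: nreach_step Hs Hn.
Qed.

Lemma nreach_nil_cat b g n : nreach (b ++ g) [::] n ->
  exists n1 n2, [/\ n = n1 + n2, nreach (b ++ g) g n1 & nreach g [::] n2].
Proof.
move=> H; move Ebg: (b ++ g) H => s; move En: [::] => e H.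
elim: H b Ebg En => [s0|s0 s' t0 n0 Hs Hss' H IH|s0 a s' t0 n0 Hs H IH] b Ebg En.
- move: Ebg; rewrite -En; case: b => [|//] /= ->.
  by exists 0, 0; split=> //; apply: nreach_refl.
- case: b Ebg => [|X b] /= Ebg; subst s0.
    by exists 0, n0; split=> //; [apply: nreach_refl|apply: nreach_inert Hs Hss' H].
  case/step_cons: Hs => rho Hr Es'.
  have [|n1 [n2 [-> H1 H2]]] := IH (rho ++ b) _ En; first by rewrite -catA.
  exists n1, n2; split=> //; apply: nreach_inert H1 => //.
  by apply/step_cons; exists rho.
- case: b Ebg => [|X b] /= Ebg; subst s0.
    by exists 0, n0.+1; split=> //; [apply: nreach_refl|apply: nreach_step Hs H].
  case/step_cons: Hs => rho Hr Es'.
  have [|n1 [n2 [-> H1 H2]]] := IH (rho ++ b) _ En; first by rewrite -catA.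
  exists n1.+1, n2; split=> //.
  by apply: (nreach_step (a := a)) H1; apply/step_cons; exists rho.
Qed.

Lemma bbisim_nil_step t a t' :
  bbisim t [::] -> step t a t' -> a = None /\ bbisim t' [::].
Proof.
move=> Ht Hs; case: (bbisim_half Ht Hs) => // [[u [t'' [p [Hu _]]]]].
by rewrite (tau_path_nil p) in Hu; case: (step_nil Hu).
Qed.

Lemma bbisim_nil_nreach0 t : bbisim t [::] -> nreach t [::] 0.
Proof.
have: reaches t [::] by apply: reaches_nil.
move E: [::] => e r; elim: r E => [s0 <- _|s0 a s' t0 Hs _ IH E Hs0].
  exact: nreach_refl.
subst t0; case: (bbisim_nil_step Hs0 Hs) => Ea Hs'; subst a.
apply: nreach_inert Hs _ (IH erefl Hs').
exact: bbisim_trans Hs0 (bbisim_sym Hs').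
Qed.

Lemma tau_path_nreach0 s t u : tau_path bbisim s t u -> bbisim s t -> nreach t u 0.
Proof.
elim=> [t0 _|t0 t1 u0 Ht Hst1 _ IH Hst0]; first exact: nreach_refl.
apply: nreach_inert Ht _ (IH Hst1).
exact: bbisim_trans (bbisim_sym Hst0) Hst1.
Qed.

Lemma bbisim_nreach_nil s t n : bbisim s t -> nreach s [::] n ->
  exists2 m, m <= n & nreach t [::] m.
Proof.
move=> Hst H; move E: [::] H => e H.
elim: H t Hst E => [s0|s0 s' t0 n0 _ Hss' _ IH|s0 a s' t0 n0 Hs _ IH] t Hst E.
- by subst s0; exists 0; last exact: bbisim_nil_nreach0 (bbisim_sym Hst).
- by apply: IH E; apply: bbisim_trans (bbisim_sym Hss') Hst.
- case: (bbisim_half Hst Hs) => [[_ Hs't]|[u [t' [p [Hu Hs't']]]]].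
    by have [m le_mn Hm] := IH t Hs't E; exists m => //; lia.
  have [m le_mn Hm] := IH t' Hs't' E; exists m.+1 => //.
  exact: nreach_trans (tau_path_nreach0 p Hst) (nreach_step Hu Hm).
Qed.

Lemma exists_norm g :
  exists n, nreach g [::] n /\ forall m, nreach g [::] m -> n <= m.
Proof. exact/nat_least/reaches_nreach/reaches_nil. Qed.

(* The norm of [X :: a ++ g] is that of [g], so the part of a minimal run
   leading from [a ++ g] down to [g] has no non-inert step. *)
Lemma bbisim_cons_suffix X a g :
  bbisim (X :: a ++ g) g -> bbisim (a ++ g) g.
Proof.
move=> H; have [k [Hk k_min]] := exists_norm g.
have [m le_mk Hm] := bbisim_nreach_nil (bbisim_sym H) Hk.
have [n1 [n2 [Em _ H2]]] := nreach_nil_cat (b := [:: X]) Hm.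
have [q1 [q2 [Eq H3 H4]]] := nreach_nil_cat H2.
have le_kq := k_min _ H4.
by apply: nreach0_bbisim; have <- : q1 = 0 by lia.
Qed.

Lemma redfree_behead X a g : redfree R (X :: a) g -> redfree R a g.
Proof. by move=> H [d [Y [b [Ea Hb]]]]; apply: H; exists (X :: d), Y, b; rewrite Ea. Qed.

Lemma redfree_nreach_size g k a n :
  (forall m, nreach g [::] m -> k <= m) ->
  redfree R a g -> nreach (a ++ g) [::] n -> size a + k <= n.
Proof.
move=> k_min; elim: a n => [|X a IH] n Ha Hn; first exact: k_min.
have [n1 [n2 [-> H1 H2]]] := nreach_nil_cat (b := [:: X]) Hn.
have := IH _ (redfree_behead Ha) H2; case: n1 H1 => [|n1] H1 /=; last lia.
by case: Ha; exists [::], X, a; split=> //; apply: nreach0_bbisim.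
Qed.

Lemma Sset_size_bound A g : exists L, forall a, Sset R A g a -> size a <= L.
Proof.
have [L HL] := reaches_nreach (reaches_catr g (normedR A)).
have [k [Hk k_min]] := exists_norm g.
exists L => a [Hag Ha].
have [m le_mL Hm] := bbisim_nreach_nil (bbisim_sym Hag) (nreach_trans HL Hk).
have := redfree_nreach_size k_min Ha Hm; lia.
Qed.

End Norms.

Section Transfer.
Variables (V Act : finType) (R : seq (rule V Act)).
Hypothesis normedR : normed R.
Variables g d : seq V.
Hypothesis Rgd : sameR R g d.

Notation tau_path := (tau_path R).
Notation bbisim := (bbisim R).

Lemma bbisim_suffix_sameR a : bbisim (a ++ g) g -> bbisim (a ++ d) d.
Proof.
elim: a => [_|X a IH H]; first exact: bbisim_refl.
have Ha := bbisim_cons_suffix normedR H.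
have HXg : bbisim (X :: g) g.
  exact: bbisim_trans (bbisim_sym (bbisim_catl [:: X] Ha)) H.
exact: bbisim_trans (bbisim_catl [:: X] (IH Ha)) (proj1 (Rgd X) HXg).
Qed.

(* Redundant pairs ([a ++ g ~ g])
   are handled by [bbisim_suffix_sameR]; for the others every state on a
   matching tau-path stays inequivalent to [g], so the path never consumes [g]
   and can be replayed above [d]. *)
Definition transfer_rel x y := bbisim x y \/ exists a b,
  [/\ x = a ++ d, y = b ++ d, bbisim (a ++ g) (b ++ g),
      ~ bbisim (a ++ g) g & ~ bbisim (b ++ g) g].

Lemma transfer_rel_sym x y : transfer_rel x y -> transfer_rel y x.
Proof.
case=> [/bbisim_sym|[a [b [-> -> Hab Ha Hb]]]]; first by left.
by right; exists b, a; split=> //; apply: bbisim_sym.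
Qed.

Lemma transfer_rel_cat a b :
  bbisim (a ++ g) (b ++ g) -> transfer_rel (a ++ d) (b ++ d).
Proof.
move=> Hab; case: (classic (bbisim (a ++ g) g)) => Ha.
  left; apply: bbisim_trans (bbisim_suffix_sameR Ha) (bbisim_sym _).
  exact/bbisim_suffix_sameR/(bbisim_trans (bbisim_sym Hab) Ha).
right; exists a, b; split=> // Hb.
exact/Ha/(bbisim_trans Hab Hb).
Qed.

Lemma tau_path_transfer a b u :
  ~ bbisim (a ++ g) g -> b != [::] -> tau_path bbisim (a ++ g) (b ++ g) u ->
  exists2 b', u = b' ++ g /\ b' != [::] &
    tau_path transfer_rel (a ++ d) (b ++ d) (b' ++ d).
Proof.
move=> Ha + p; move Ebg: (b ++ g) p => t p.
elim: p b Ebg => [t0|t0 t1 u0 Ht Hat1 _ IH] b Ebg nz_b.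
  by exists b; last exact: tau_path_refl.
case: b Ebg nz_b => [//|Y b] /= Ebg _; subst t0.
case/step_cons: Ht => rho Hr Et1.
have nz_rhob : rho ++ b != [::].
  apply/eqP => Erhob; apply: Ha; apply: bbisim_trans Hat1 _.
  by rewrite Et1 catA Erhob; apply: bbisim_refl.
have [|b' [Eu nz_b'] p'] := IH (rho ++ b) _ nz_rhob; first by rewrite Et1 catA.
exists b' => //; apply: tau_path_step p'.
  by apply/step_cons; exists rho; rewrite ?catA.
by apply: transfer_rel_cat; rewrite -catA -Et1.
Qed.

Lemma transfer_rel_half : bb_half R transfer_rel.
Proof.
move=> x y [Hxy|[a [b [-> -> Hab Ha Hb]]]] c x' Hs.
  case: (bbisim_half Hxy Hs) => [[-> ?]|[u [t' [p [Hu ?]]]]]; first by left; split=> //; left.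
  right; exists u, t'; split; last by split=> //; left.
  by apply: tau_path_mono p => z Hz; left.
case: a Ha Hab Hs => [|X a] Ha Hab Hs; first by case: Ha; apply: bbisim_refl.
case/step_cons: Hs => rho Hr ->.
have Hs : step R (X :: a ++ g) c (rho ++ a ++ g) by apply/step_cons; exists rho.
case: (bbisim_half Hab Hs) => [[-> Hb']|[u [t' [p [Hu Ht']]]]].
  by left; split=> //; rewrite catA; apply: transfer_rel_cat; rewrite -catA.
have nz_b : b != [::] by apply/eqP => Eb; apply: Hb; rewrite Eb; apply: bbisim_refl.
have [[|Y b'] [Eu _] // p'] := tau_path_transfer Ha nz_b p.
move: Hu; rewrite Eu => /step_cons [rho' Hr' Et'].
right; exists (Y :: b' ++ d), (rho' ++ b' ++ d); split=> //; split.
  by apply/step_cons; exists rho'.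
by rewrite catA [rho' ++ _]catA; apply: transfer_rel_cat; rewrite -!catA -Et'.
Qed.

Lemma bbisim_sameR a b : bbisim (a ++ g) (b ++ g) -> bbisim (a ++ d) (b ++ d).
Proof.
by move=> /transfer_rel_cat; apply: (bbisim_sym_half (@transfer_rel_sym) transfer_rel_half).
Qed.

End Transfer.

Lemma exists_least (T : eqType) (le : rel T) (s : seq T) :
  transitive le -> total le -> s != [::] -> exists2 m, m \in s & all (le m) s.
Proof.
move=> le_tr le_total; case Es: (sort le s) => [|m t] nz_s.
  by move: nz_s; rewrite -size_eq0 -(size_sort le) Es.
exists m; first by rewrite -(mem_sort le) Es mem_head.
have le_mm : le m m by move: (le_total m m); rewrite orbb.
have := sort_sorted le_total s; rewrite Es /= => /(order_path_min le_tr).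
by rewrite -(perm_all _ (permEl (perm_sort le s))) Es /= le_mm.
Qed.

Lemma seq_filter_prop (T : eqType) (P : T -> Prop) (c : seq T) :
  exists l : seq T, forall a, P a /\ a \in c <-> a \in l.
Proof.
elim: c => [|x c [l Hl]]; first by exists [::] => a; split=> [[]|].
case: (classic (P x)) => Px.
  exists (x :: l) => a; rewrite !inE; split.
    by case=> Pa /orP[->//|ac]; apply/orP; right; apply/Hl.
  by case/orP=> [/eqP->|/Hl[Pa ->]]; rewrite ?eqxx ?orbT.
exists l => a; rewrite -Hl inE; split=> [[Pa /orP[/eqP Eax|ac]]|[Pa ->]]; rewrite ?orbT //.
by rewrite Eax in Pa.
Qed.

Section Words.
Variable V : finType.

Fixpoint words_upto n : seq (seq V) :=
  if n is n'.+1 then [::] :: [seq x :: s | x <- enum V, s <- words_upto n']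
  else [:: [::]].

Lemma mem_words_upto n s : size s <= n -> s \in words_upto n.
Proof.
elim: n s => [|n IH] [|x s] //= Hs; rewrite inE; apply/orP; right.
by apply: (allpairs_f (fun x s => x :: s)); [rewrite mem_enum|apply: IH].
Qed.

Variable lt : rel V.
Hypothesis lt_strict : strict_total lt.

(* Comparison from the first letter; [lexlt] compares from the last one. *)
Fixpoint lex (s t : seq V) : bool :=
  match s, t with
  | x :: s', y :: t' => lt x y || (x == y) && lex s' t'
  | _, _ => false
  end.

Lemma lex_irr s : ~~ lex s s.
Proof.
case: lt_strict => lt_irr _.
by elim: s => [|x s IH] //=; rewrite lt_irr eqxx (negbTE IH).
Qed.

Lemma lex_trans s t u : lex s t -> lex t u -> lex s u.
Proof.
case: lt_strict => _ [lt_tr _].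
elim: s t u => [|x s IH] [|y t] [|z u] //=.
case/orP=> [lt_xy|/andP[/eqP<- st]]; case/orP=> [lt_yz|/andP[/eqP<- tu]].
- by rewrite (lt_tr _ _ _ lt_xy lt_yz).
- by rewrite lt_xy.
- by rewrite lt_yz.
- by rewrite eqxx (IH _ _ st tu) orbT.
Qed.

Lemma lex_total s t : size s = size t -> s != t -> lex s t || lex t s.
Proof.
case: lt_strict => _ [_ lt_total].
elim: s t => [|x s IH] [|y t] //= [Est]; have [<-|Nxy] := eqVneq x y.
  by rewrite eqseq_cons eqxx /= => /(IH _ Est) /orP[->|->]; rewrite !orbT.
by move=> _; case/orP: (lt_total _ _ Nxy) => ->; rewrite ?orbT.
Qed.

Lemma lex_rev_catl r A B x y :
  lt A B -> lex (rev (x ++ A :: r)) (rev (y ++ B :: r)).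
Proof.
rewrite !rev_cat !rev_cons !cat_rcons => lt_AB.
by elim: (rev r) => [|z r' IH] /=; rewrite ?lt_AB // eqxx IH orbT.
Qed.

Lemma lexlt_lex a b : size a = size b -> lexlt lt a b -> lex (rev a) (rev b).
Proof.
move=> Eab [[p [nz_p Eb]]|[x [y [A [B [r [-> [-> lt_AB]]]]]]]].
  by move/eqP: Eab; rewrite Eb size_cat -{1}[size a]add0n eqn_add2r eq_sym size_eq0 (negbTE nz_p).
exact: lex_rev_catl.
Qed.

Lemma lex_lexlt a b : lex (rev a) (rev b) -> lexlt lt a b.
Proof.
rewrite -{2}[a]revK -{2}[b]revK; elim: (rev a) (rev b) => [|x s IH] [|y t] //=.
rewrite !rev_cons -!cats1; case/orP=> [lt_xy|/andP[/eqP <- /IH]].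
  by right; exists (rev s), (rev t), x, y, [::].
case=> [[p [nz_p ->]]|[a' [b' [A [B [r [-> [-> lt_AB]]]]]]]].
  by left; exists p; rewrite catA.
by right; exists a', b', A, B, (r ++ [:: x]); rewrite -!catA.
Qed.

Definition canon_lt (a b : seq V) :=
  (size b < size a) || (size a == size b) && lex (rev a) (rev b).

Lemma canon_lt_trans : transitive canon_lt.
Proof.
move=> b a c /orP[lt_ba|/andP[/eqP Eab ab]] /orP[lt_cb|/andP[/eqP Ebc bc]].
- by rewrite /canon_lt (ltn_trans lt_cb lt_ba).
- by rewrite /canon_lt -Ebc lt_ba.
- by rewrite /canon_lt Eab lt_cb.
- by rewrite /canon_lt Eab Ebc eqxx (lex_trans ab bc) orbT.
Qed.

Lemma canon_lt_total a b : a != b -> canon_lt a b || canon_lt b a.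
Proof.
rewrite /canon_lt; case: (ltngtP (size a) (size b)) => [|_|Eab] Nab; rewrite ?orbT //.
by apply: lex_total; rewrite ?size_rev ?(can_eq revK).
Qed.

End Words.

Section Canonical.
Variables (V Act : finType) (R : seq (rule V Act)).
Hypothesis normedR : normed R.

Notation bbisim := (bbisim R).
Notation Sset := (Sset R).

Lemma sameR_sym g d : sameR R g d -> sameR R d g.
Proof. by move=> Rgd X; rewrite Rgd. Qed.

Lemma bbisim_sameR_iff g d a b : sameR R g d ->
  bbisim (a ++ g) (b ++ g) <-> bbisim (a ++ d) (b ++ d).
Proof. by move=> Rgd; split; apply: bbisim_sameR => //; apply: sameR_sym. Qed.

Lemma sameR_cons g d A : sameR R g d -> sameR R (A :: g) (A :: d).
Proof. by move=> Rgd X; apply: (bbisim_sameR_iff [:: X; A] [:: A] Rgd). Qed.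

Lemma redfree_sameR g d a : sameR R g d -> redfree R a g <-> redfree R a d.
Proof.
move=> Rgd; rewrite /redfree.
by split=> H [e [X [b [Ea Hb]]]]; apply: H; exists e, X, b;
  split=> //; apply/(bbisim_sameR_iff (X :: b) b Rgd).
Qed.

Lemma Sset_sameR A g d a : sameR R g d -> Sset A g a <-> Sset A d a.
Proof.
move=> Rgd; rewrite /Sset (redfree_sameR a Rgd).
by rewrite (bbisim_sameR_iff a [:: A] Rgd).
Qed.

Lemma Sset_finite A g : exists l : seq (seq V), forall a, Sset A g a <-> a \in l.
Proof.
have [L HL] := Sset_size_bound normedR A g.
have [l Hl] := seq_filter_prop (Sset A g) (words_upto V L).
by exists l => a; rewrite -Hl; split=> [Sa|[]//]; split=> //; apply/mem_words_upto/HL.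
Qed.

Lemma Sset_nonempty A g : exists a, Sset A g a.
Proof.
case: (classic (bbisim (A :: g) g)) => HA.
  by exists [::]; split; [apply: bbisim_sym|case=> [[|? ?] [? [? []]]]].
exists [:: A]; split; first exact: bbisim_refl.
case=> [[|Y e] [X [b [Ea HX]]]]; first by case: Ea => EA Eb; subst; apply: HA.
by move/(congr1 size): Ea; rewrite /= size_cat /=; lia.
Qed.

Variable lt : rel V.
Hypothesis lt_strict : strict_total lt.

Notation canon := (canon R lt).

Lemma canon_sameR A g d a : sameR R g d -> canon A g a <-> canon A d a.
Proof.
move=> Rgd; have E b : Sset A g b <-> Sset A d b := Sset_sameR A b Rgd.
by rewrite /canon; setoid_rewrite E.
Qed.

Lemma canon_unique A g a1 a2 : canon A g a1 -> canon A g a2 -> a1 = a2.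
Proof.
move=> [S1 [M1 L1]] [S2 [M2 L2]].
have E12 : size a1 = size a2 by apply/eqP; rewrite eqn_leq M1 ?M2.
have [//|/eqP N12] := eqVneq a1 a2.
have lex12 := lexlt_lex E12 (L1 _ S2 (esym E12) (nesym N12)).
have lex21 := lexlt_lex (esym E12) (L2 _ S1 E12 N12).
by move: (lex_irr lt_strict (rev a1)); rewrite (lex_trans lt_strict lex12 lex21).
Qed.

Lemma canon_exists A g : exists a, canon A g a.
Proof.
have [l Hl] := Sset_finite A g; have [a0 Sa0] := Sset_nonempty A g.
pose le a b := (a == b) || canon_lt lt a b.
have le_tr : transitive le.
  move=> b a c /orP[/eqP->//|ab] /orP[/eqP<-|bc]; rewrite /le ?ab ?orbT //.
  by rewrite (canon_lt_trans lt_strict ab bc) orbT.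
have le_total : total le.
  move=> a b; rewrite /le; have [//|/(canon_lt_total lt_strict)] := eqVneq a b.
  by case/orP=> ->; rewrite !orbT.
have nz_l : l != [::] by case: l Hl => // /(_ a0) [/(_ Sa0)].
have [m /Hl Sm /allP le_m] := exists_least le_tr le_total nz_l.
exists m; split=> //; split=> b /Hl /le_m; rewrite /le /canon_lt.
  by case/orP=> [/eqP->//|/orP[/ltnW//|/andP[/eqP-> _]]].
case/orP=> [/eqP-> _ //|/orP[lt_bm Ebm|/andP[_ lex_mb] _ _]].
  by rewrite Ebm ltnn in lt_bm.
exact: lex_lexlt.
Qed.

End Canonical.

Unset Implicit Arguments.

Theorem mainTheorem10 (V Act : finType) (R : seq (rule V Act)) (lt : rel V) :
  normed R -> strict_total lt ->
  (forall gamma delta : seq V, sameR R gamma delta ->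
     (forall A : V, sameR R (A :: gamma) (A :: delta)) /\
     (forall alpha beta : seq V,
        bbisim R (alpha ++ gamma) (beta ++ gamma) <->
        bbisim R (alpha ++ delta) (beta ++ delta))) /\
  (forall (A : V) (gamma : seq V),
     (exists l : seq (seq V), forall alpha, Sset R A gamma alpha <-> alpha \in l) /\
     (exists alpha, Sset R A gamma alpha)) /\
  (forall (A : V) (gamma delta : seq V), sameR R gamma delta ->
     forall alpha, Sset R A gamma alpha <-> Sset R A delta alpha) /\
  (forall (A : V) (gamma : seq V), exists! alpha, canon R lt A gamma alpha) /\
  (forall (A : V) (gamma delta : seq V), sameR R gamma delta ->
     forall alpha, canon R lt A gamma alpha <-> canon R lt A delta alpha).
Proof.
move=> normedR lt_strict.
split=> [g d Rgd|]; first by split=> [A|a b]; [apply: sameR_cons|apply: bbisim_sameR_iff].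
split=> [A g|]; first by split; [apply: Sset_finite|apply: Sset_nonempty].
split=> [A g d Rgd a|]; first exact: Sset_sameR.
split=> [A g|A g d Rgd a]; last exact: canon_sameR.
have [a Ha] := canon_exists normedR lt_strict A g.
by exists a; split=> // b; apply: canon_unique.
Qed.
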